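(* Let $X$ be a normal topological space and let $f,g,h\colon X\to Y$ be continuous maps. Then $\mathrm{D}(f,h)\leq \mathrm{D}(f,g)+\mathrm{D}(g,h)$.
   Context: For continuous maps $f,g\colon X\to Y$, the homotopic distance $\mathrm{D}(f,g)$ is the least integer $n\geq 0$ such that there is an open cover $\{U_0,\dots,U_n\}$ of $X$ with $f|_{U_j}\simeq g|_{U_j}$ for all $j$; if no such cover exists, $\mathrm{D}(f,g)=\infty$. *)

From HB Require Import structures.
From mathcomp Require Import all_boot all_order all_algebra.
From mathcomp Require Import all_classical all_reals all_analysis.
From mathcomp Require Import Rstruct Rstruct_topology.
Set Implicit Arguments. Unset Strict Implicit. Unset Printing Implicit Defensive.
Import Order.TTheory GRing.Theory Num.Theory.
Local Open Scope classical_set_scope.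
Local Open Scope ring_scope.

Definition unit_interval : set Rdefinitions.R := `[0%R, 1%R].

(* f|_U ~ g|_U : the restrictions of f and g to U (with the subspace
   topology) are homotopic, i.e. there is H : U x [0,1] -> Y continuous
   (for the subspace topology of U x [0,1] in X x R) with H(x,0) = f x and
   H(x,1) = g x for x in U. *)
Definition homotopic_on {X Y : topologicalType} (U : set X) (f g : X -> Y) :=
  exists H : X * Rdefinitions.R -> Y,
    [/\ {within U `*` unit_interval, continuous H},
        (forall x, U x -> H (x, 0%R) = f x) &
        (forall x, U x -> H (x, 1%R) = g x)].

Definition hdist_cover {X Y : topologicalType} (f g : X -> Y) (n : nat) :=
  exists U : nat -> set X,
    [/\ (forall j, (j <= n)%N -> open (U j)),
        (forall x : X, exists2 j, (j <= n)%N & U j x) &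
        (forall j, (j <= n)%N -> homotopic_on (U j) f g)].

(* Homotopic distance D(f,g), valued in the extended reals: the least such n,
   or +oo if no such cover exists (the infimum of the empty set is +oo). *)
Definition hdist {X Y : topologicalType} (f g : X -> Y) : \bar Rdefinitions.R :=
  ereal_inf [set ((n%:R)%:E : \bar Rdefinitions.R) | n in hdist_cover f g].

From HB Require Import structures.
From mathcomp Require Import all_boot all_order all_algebra.
From mathcomp Require Import all_classical all_reals all_analysis.
From mathcomp Require Import Rstruct Rstruct_topology.
From mathcomp Require Import lra zify.
Import Order.TTheory GRing.Theory Num.Theory.
Import numFieldNormedType.Exports.
Local Open Scope classical_set_scope.
Local Open Scope ring_scope.

(* Let U_0, ..., U_n and V_0, ..., V_m be open covers with f ~ g on each U_i
   and g ~ h on each V_j. Normality (Urysohn's lemma, applied to one set at a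
   time) yields continuous u_i, v_j >= 0 with {u_i > 0} in U_i, {v_j > 0} in V_j,
   and whose positivity sets still cover X. Put S_i = u_0 + ... + u_(i-1),
   T_j = v_0 + ... + v_(j-1) and let W_ij be the open set where the intervals
   ]S_i, S_(i+1)[ and ]T_j, T_(j+1)[ overlap. Then W_ij lies in U_i and V_j, so
   f ~ h on W_ij by concatenating homotopies; the W_ij with i + j = k are
   pairwise disjoint, so these homotopies glue on their union W_k; and each x is
   in W_ij for the first i, j with S_(i+1) x > 0 and T_(j+1) x > 0. Hence
   W_0, ..., W_(n+m) witnesses D(f,h) <= n + m. *)

Section steps.
Context {R : realDomainType}.
Implicit Types (s t : nat -> R).

Definition steps_meet s t i j := Num.max (s i) (t j) < Num.min (s i.+1) (t j.+1).

Lemma steps_meetE s t i j : steps_meet s t i j =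
  [&& s i < s i.+1, t j < s i.+1, s i < t j.+1 & t j < t j.+1].
Proof. by rewrite /steps_meet lt_min !gt_max !andbA. Qed.

Lemma steps_meet_antidiag s t i j i' j' :
  nondecreasing_seq s -> nondecreasing_seq t ->
  steps_meet s t i j -> steps_meet s t i' j' -> (i + j = i' + j')%N ->
  (i, j) = (i', j').
Proof.
move=> ns nt.
have cross i1 j1 i2 j2 : steps_meet s t i1 j1 -> steps_meet s t i2 j2 ->
    (i1 < i2)%N -> (j2 < j1)%N -> False.
  rewrite !steps_meetE => /and4P[_ tj1 _ _] /and4P[_ _ si2 _] lti ltj.
  have tj1_lt_tj2S := lt_le_trans (lt_le_trans tj1 (ns _ _ lti)) (ltW si2).
  by have := lt_le_trans tj1_lt_tj2S (nt _ _ ltj); rewrite ltxx.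
move=> mij mij' e; case: (ltngtP i i') => [lti|lti|eqi].
- by have [] := cross _ _ _ _ mij mij' lti; lia.
- by have [] := cross _ _ _ _ mij' mij lti; lia.
- by congr pair; lia.
Qed.

Lemma exists_crossing (a : nat -> R) c n : a 0%N <= c -> c < a n.+1 ->
  exists2 i, (i <= n)%N & a i <= c < a i.+1.
Proof.
move=> a0; elim: n => [|n IH] an; first by exists 0%N => //; rewrite a0 an.
have [/IH [i iin ai]|anc] := ltP c (a n.+1); first by exists i => //; exact: leqW.
by exists n.+1 => //; rewrite anc an.
Qed.

Lemma steps_meet_exists s t n m : s 0%N <= 0 -> t 0%N <= 0 -> 0 < s n.+1 -> 0 < t m.+1 ->
  exists i j, [/\ (i <= n)%N, (j <= m)%N & steps_meet s t i j].
Proof.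
move=> s0 t0 sn tm.
have [i iin /andP[si si1]] := exists_crossing _ _ _ s0 sn.
have [j jm /andP[tj tj1]] := exists_crossing _ _ _ t0 tm.
exists i, j; split => //; apply: (@le_lt_trans _ _ 0).
  by rewrite ge_max si tj.
by rewrite lt_min si1 tj1.
Qed.

End steps.

Section series.
Context {R : realType}.

Lemma series0 (u : R ^nat) : series u 0 = 0.
Proof. by rewrite /series /= big_geq. Qed.

Lemma series_ltS (u : R ^nat) i : (series u i < series u i.+1) = (0 < u i).
Proof. by rewrite seriesSr ltrDl. Qed.

Lemma series_nondecreasing (u : R ^nat) :
  (forall i, 0 <= u i) -> nondecreasing_seq (series u).
Proof. by move=> u0; exact: nondecreasing_series. Qed.

Lemma series_gt0 (u : R ^nat) n : (forall i, 0 <= u i) ->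
  (exists2 i, (i <= n)%N & 0 < u i) -> 0 < series u n.+1.
Proof.
move=> u0 [i iin ui]; rewrite -series_ltS in ui.
have s0i : series u 0 <= series u i := series_nondecreasing u u0 _ _ (leq0n i).
have sin : series u i.+1 <= series u n.+1.
  exact: series_nondecreasing u u0 _ _ (iin : (i < n.+1)%N).
by rewrite -(series0 u); exact: le_lt_trans s0i (lt_le_trans ui sin).
Qed.

Lemma continuous_series {T : topologicalType} (u : nat -> T -> R) n :
  (forall i, continuous (u i)) -> continuous (fun x => series (u ^~ x) n).
Proof.
move=> cu; elim: n => [|n IH] x.
  by under eq_fun do rewrite series0; exact: cvg_cst.
by under eq_fun do rewrite seriesSr; exact: cvgD (IH x) (cu n x).
Qed.

Lemma open_lt_continuous {T : topologicalType} (f g : T -> R) :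
  continuous f -> continuous g -> open [set x | f x < g x].
Proof.
move=> cf cg; rewrite (_ : [set x | _] = (g \- f) @^-1` [set y | 0 < y]).
  by apply: open_comp (@open_gt _ 0) => x _; exact: cvgB (cg x) (cf x).
by apply/seteqP; split => x /=; rewrite subr_gt0.
Qed.

End series.

Section ereal_inf_nat.
Context {R : realType}.
Local Notation einf A := (ereal_inf [set ((n%:R)%:E : \bar R) | n in A]).
Local Open Scope ereal_scope.

Lemma ereal_inf_nat_ge0 (A : set nat) : 0 <= einf A.
Proof. by apply: le_ereal_inf_tmp => _ [k _ <-]; rewrite lee_fin ler0n. Qed.

Lemma ereal_inf_nat_min (A : set nat) n : A n -> exists2 k, A k & einf A = k%:R%:E.
Proof.
move=> An; have exA : exists n, `[< A n >] by exists n; exact/asboolP.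
case: (ex_minnP exA) => k /asboolP Ak kmin; exists k => //.
apply/le_anti/andP; split; first by apply: ereal_inf_lbound; exists k.
apply: le_ereal_inf_tmp => _ [i Ai <-]; rewrite lee_fin ler_nat.
by apply: kmin; exact/asboolP.
Qed.

Lemma ereal_inf_nat_add (A B C : set nat) :
  (forall a b, A a -> B b -> C (a + b)%N) -> einf C <= einf A + einf B.
Proof.
move=> ABC; have einf_neqNy D : einf D != -oo.
  by rewrite gt_eqF // (lt_le_trans ltNy0 (ereal_inf_nat_ge0 D)).
have [->|/set0P[a Aa]] := eqVneq A set0.
  by rewrite image_set0 ereal_inf0 addye ?leey.
have [->|/set0P[b Bb]] := eqVneq B set0.
  by rewrite image_set0 ereal_inf0 addey ?leey.
have [ka Aka ->] := ereal_inf_nat_min A a Aa.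
have [kb Bkb ->] := ereal_inf_nat_min B b Bb.
by rewrite -EFinD -natrD; apply: ereal_inf_lbound; exists (ka + kb)%N => //; exact: ABC.
Qed.

End ereal_inf_nat.

Section normal_cover.
Context {T : topologicalType} {R : realType}.
Hypothesis normalT : normal_space T.

Lemma normal_open_shrink (U O : set T) :
  open U -> open O -> U `|` O = setT ->
  exists F : T -> R, [/\ continuous F, forall x, 0 <= F x,
    [set x | 0 < F x] `<=` U & ~` O `<=` [set x | F x = 1]].
Proof.
move=> oU oO UO.
have UOC : ~` U `&` ~` O = set0 by rewrite -setCU UO setCT.
have [F [cF F01 F0 F1]] := proj1 (@uniform_separatorP T R _ _)
  (proj1 (@normal_separatorP R T) normalT _ _ (open_closedC oU) (open_closedC oO) UOC).
exists F; split => // [x|x Fx|x nOx]; last exact: F1 _ (ex_intro2 _ _ x nOx erefl).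
  by have := F01 (F x) (ex_intro2 _ _ x I erefl); rewrite /= in_itv /= => /andP[].
apply: contrapT => nUx; have /= Fx0 := F0 _ (ex_intro2 _ _ x nUx erefl).
by move: Fx; rewrite /= Fx0 ltxx.
Qed.

Lemma normal_cover_subordinate (U : nat -> set T) n :
  (forall i, (i <= n)%N -> open (U i)) -> (forall x, exists2 i, (i <= n)%N & U i x) ->
  exists u : nat -> T -> R, [/\ forall i, continuous (u i), forall i x, 0 <= u i x,
    forall i, [set x | 0 < u i x] `<=` U i &
    forall x, exists2 i, (i <= n)%N & 0 < u i x].
Proof.
move=> oU coverU.
(* Invariant after k steps: U i has been shrunk to {u i > 0} for every i < k. *)
suff /(_ n.+1 (leqnn _)) [u [cu u0 uU cov]] : forall k, (k <= n.+1)%N ->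
    exists u : nat -> T -> R, [/\ forall i, continuous (u i), forall i x, 0 <= u i x,
      forall i, [set x | 0 < u i x] `<=` U i &
      forall x, exists2 i, (i <= n)%N &
        (if (i < k)%N then [set x | 0 < u i x] else U i) x].
  by exists u; split => // x; have [i iin] := cov x; rewrite ltnS iin; exists i.
elim=> [_|k IH kn].
  exists (fun _ _ => 0); split => [i x|//|i x /=|x]; first exact: cvg_cst.
    by rewrite ltxx.
  by have [i iin Uix] := coverU x; exists i.
have [u [cu u0 uU cov]] := IH (ltnW kn).
pose O := \bigcup_(i in [set i | (i <= n)%N /\ i != k])
  (if (i < k)%N then [set x | 0 < u i x] else U i).
have oO : open O.
  apply: bigcup_open => i [iin _]; case: (i < k)%N; last exact: oU.
  exact: open_comp (fun x _ => cu i x) (@open_gt _ 0).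
have UkO : U k `|` O = setT.
  apply/seteqP; split => // x _; have [i iin Ci] := cov x.
  have [eik|neik] := eqVneq i k; last by right; exists i.
  by left; move: Ci; rewrite eik ltnn.
have [F [cF F0 FU FO]] := normal_open_shrink _ _ (oU k kn) oO UkO.
exists (fun i => if i == k then F else u i); split.
- by move=> i; case: eqP.
- by move=> i x; case: eqP.
- by move=> i; case: eqP => [->|_]; [exact: FU | exact: uU].
- move=> x; case: (pselect (O x)) => [[i [iin neik] Ci]|nOx].
    by exists i => //; rewrite ltnS leq_eqVlt (negbTE neik).
  by exists k => //; rewrite ltnSn /= eqxx FO // ltr01.
Qed.

End normal_cover.

Section within_continuity.
Context {T U : topologicalType}.

Lemma within_continuous_local (D : set T) (f : T -> U) :
  (forall x, D x -> exists2 O, open O /\ O x & {within D `&` O, continuous f}) ->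
  {within D, continuous f}.
Proof.
move=> loc; apply/subspace_continuousP => x Dx.
case: (loc x Dx) => O [oO Ox] /subspace_continuousP/(_ x (conj Dx Ox)) fO.
move=> P /fO; rewrite !nbhs_simpl /= => DOP.
have Ox_nbhs : nbhs x O by exact: open_nbhs_nbhs.
by move: DOP Ox_nbhs; rewrite /within /=; apply: filterS2 => y DOPy Oy Dy; exact: DOPy.
Qed.

Lemma within_closed_paste (D A B : set T) (f : T -> U) :
  closed A -> closed B -> D `<=` A `|` B ->
  {within D `&` A, continuous f} -> {within D `&` B, continuous f} ->
  {within D, continuous f}.
Proof.
move=> cA cB DAB ctsA ctsB; apply/continuous_closedP => W oW.
case/continuous_closedP/(_ _ oW)/closed_subspaceP: ctsA => V1 cV1 V1W.
case/continuous_closedP/(_ _ oW)/closed_subspaceP: ctsB => V2 cV2 V2W.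
apply/closed_subspaceP; exists ((V1 `&` A) `|` (V2 `&` B)).
  by apply: closedU; exact: closedI.
apply/seteqP; split => x.
  case=> [[[V1x Ax]|[V2x Bx]] Dx].
    by have : (V1 `&` (D `&` A)) x by []; rewrite V1W => -[].
  by have : (V2 `&` (D `&` B)) x by []; rewrite V2W => -[].
case=> Wx Dx; split => //; case: (DAB x Dx) => [Ax|Bx]; [left|right].
  by have : (from_subspace (D `&` A) f @^-1` W `&` (D `&` A)) x by [];
    rewrite -V1W => -[].
by have : (from_subspace (D `&` B) f @^-1` W `&` (D `&` B)) x by [];
  rewrite -V2W => -[].
Qed.

Lemma within_comp_continuous {S : topologicalType} (A : set S) (B : set T)
    (phi : S -> T) (f : T -> U) :
  continuous phi -> phi @` A `<=` B -> {within B, continuous f} ->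
  {within A, continuous (f \o phi)}.
Proof.
move=> cphi AB /subspace_continuousP cf; apply/subspace_continuousP => x Ax.
have Bphix : B (phi x) by apply: AB; exists x.
move=> P /(cf _ Bphix) fP; have := cphi x _ fP; rewrite /= nbhs_simpl /=.
by apply: filterS => y fPy Ay; apply: fPy; apply: AB; exists y.
Qed.

End within_continuity.

Lemma continuous_fst {A B : topologicalType} : continuous (@fst A B).
Proof. by move=> [a b]; exact: cvg_fst. Qed.

Lemma continuous_snd {A B : topologicalType} : continuous (@snd A B).
Proof. by move=> [a b]; exact: cvg_snd. Qed.

Lemma continuous_snd_affine {X : topologicalType} {R : realType} (a b : R) :
  continuous (fun p : X * R => (p.1, a * p.2 + b)).
Proof.
move=> p.
have affine : continuous (fun s : R => a * s + b).
  by move=> s; apply: cvgD; [apply: cvgMl_tmp; exact: cvg_id | exact: cvg_cst].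
have snd_p : (fun q : X * R => a * q.2 + b) @ nbhs p --> a * p.2 + b.
  exact: (continuous_comp (continuous_snd p) (affine p.2)).
exact: (@cvg_pair _ _ _ _ _ _ (nbhs_filter p) (nbhs_filter _) (nbhs_filter _)
  _ _ (continuous_fst p) snd_p).
Qed.

Local Notation R := Rdefinitions.R.

Section homotopic_on.
Context {X Y : topologicalType}.
Implicit Types (f g h : X -> Y).

Lemma homotopic_on_subset (A B : set X) f g :
  A `<=` B -> homotopic_on B f g -> homotopic_on A f g.
Proof.
move=> AB [H [cH H0 H1]]; exists H; split.
- by apply: continuous_subspaceW cH => -[x t] [/= /AB].
- by move=> x /AB; exact: H0.
- by move=> x /AB; exact: H1.
Qed.

Lemma unit_intervalE (t : R) : unit_interval t = (0 <= t <= 1).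
Proof. by rewrite /unit_interval /= in_itv. Qed.

Lemma within_continuous_reparam (W : set X) (H : X * R -> Y) (J : set R) (a b : R) :
  {within W `*` unit_interval, continuous H} ->
  (forall t, unit_interval t -> J t -> unit_interval (a * t + b)) ->
  {within (W `*` unit_interval) `&` [set p | J p.2],
    continuous (fun p => H (p.1, a * p.2 + b))}.
Proof.
move=> cH abJ; apply: (within_comp_continuous _ _ _ _ (continuous_snd_affine a b) _ cH).
by move=> _ [[x t] [[/= Wx It] /= Jt] <-]; split => //=; exact: abJ.
Qed.

Lemma homotopic_on_trans (W : set X) f g h :
  homotopic_on W f g -> homotopic_on W g h -> homotopic_on W f h.
Proof.
case=> H1 [c1 H10 H11]; case=> H2 [c2 H20 H21].
pose K p := if p.2 <= 1/2 then H1 (p.1, 2 * p.2 + 0) else H2 (p.1, 2 * p.2 - 1).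
have closed_snd (P : set R) : closed P -> closed [set p : X * R | P p.2].
  by move=> cP; exact: (proj1 (continuous_closedP _) (fun p => cvg_snd) _ cP).
exists K; split.
- apply: (within_closed_paste _ [set p : X * R | p.2 <= 1/2] [set p | 1/2 <= p.2]).
  + exact: (closed_snd _ (@closed_le _ (1/2))).
  + exact: (closed_snd _ (@closed_ge _ (1/2))).
  + by move=> p _; case: (lerP p.2 (1/2)) => hp; [left|right; exact: ltW].
  + apply: (subspace_eq_continuous _ (within_continuous_reparam _ _
      [set t | t <= 1/2] 2 0 c1 _)).
      by move=> [x t]; rewrite inE /= => -[_ ht]; rewrite /from_subspace /K /= ht.
    by move=> t; rewrite !unit_intervalE /= => /andP[t0 t1] th; apply/andP; split; lra.
  + apply: (subspace_eq_continuous _ (within_continuous_reparam _ _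
      [set t | 1/2 <= t] 2 (-1) c2 _)).
      move=> [x t]; rewrite inE /= => -[[Wx _] ht]; rewrite /from_subspace /K /=.
      case: ifPn => // ht'; have {ht ht'} -> : t = 1/2 by apply/eqP; rewrite eq_le ht ht'.
      have -> : 2 * (1/2) + -1 = 0 :> R by lra.
      have -> : 2 * (1/2) + 0 = 1 :> R by lra.
      by rewrite H11 // H20.
    by move=> t; rewrite !unit_intervalE /= => /andP[t0 t1] th; apply/andP; split; lra.
- by move=> x Wx; rewrite /K /= ifT ?mulr0 ?addr0 ?H10 //; lra.
- move=> x Wx; rewrite /K /= ifF; last by apply/negbTE; rewrite -ltNge; lra.
  have -> : 2 * 1 - 1 = 1 :> R by lra.
  exact: H21.
Qed.

Lemma homotopic_on_bigcup {I : pointedType} (P : set I) (W : I -> set X) f g :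
  (forall i, P i -> open (W i)) -> trivIset P W ->
  (forall i, P i -> homotopic_on (W i) f g) ->
  homotopic_on (\bigcup_(i in P) W i) f g.
Proof.
move=> oW tW hW.
have /choice [H HP] : forall i, exists H : X * R -> Y, P i ->
    [/\ {within W i `*` unit_interval, continuous H},
        forall x, W i x -> H (x, 0) = f x & forall x, W i x -> H (x, 1) = g x].
  move=> i; case: (pselect (P i)) => [/hW [H hH]|nPi]; first by exists H.
  by exists (fun q => f q.1).
pose idx x := get [set i | P i /\ W i x].
have idxP x i : P i -> W i x -> idx x = i.
  move=> Pi Wix; have [Pj Wjx] : [set j | P j /\ W j x] (idx x).
    by apply: getPex; exists i.
  by apply: tW => //; exists x.
exists (fun q => H (idx q.1) q); split.
- apply: within_continuous_local => -[x t] [/= [i Pi Wix] _].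
  exists (fst @^-1` W i).
    by split => //; apply: open_comp (oW i Pi) => q _; exact: continuous_fst.
  have [cH _ _] := HP i Pi.
  apply: (subspace_eq_continuous _ (continuous_subspaceW _ cH)); last first.
    by move=> [y s] [[_ Is] /= Wiy].
  move=> [y s]; rewrite inE => -[[[j Pj Wjy] _] /= Wiy].
  by rewrite /from_subspace /= (idxP y i Pi Wiy).
- by move=> x [i Pi Wix]; rewrite (idxP x i Pi Wix); have [_ H0 _] := HP i Pi; exact: H0.
- by move=> x [i Pi Wix]; rewrite (idxP x i Pi Wix); have [_ _ H1] := HP i Pi; exact: H1.
Qed.

End homotopic_on.

Lemma hdist_cover_add {X Y : topologicalType} (f g h : X -> Y) n m :
  normal_space X -> hdist_cover f g n -> hdist_cover g h m -> hdist_cover f h (n + m).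
Proof.
move=> nX [U [oU coverU hU]] [V [oV coverV hV]].
have [u [cu u0 uU ucov]] := normal_cover_subordinate (R := R) nX U n oU coverU.
have [v [cv v0 vV vcov]] := normal_cover_subordinate (R := R) nX V m oV coverV.
pose W (ij : nat * nat) :=
  [set x | steps_meet (series (u ^~ x)) (series (v ^~ x)) ij.1 ij.2].
pose antidiag k :=
  [set ij : nat * nat | [/\ (ij.1 <= n)%N, (ij.2 <= m)%N & (ij.1 + ij.2 = k)%N]].
have oW ij : open (W ij).
  apply: open_lt_continuous => x.
    exact: continuous_max (continuous_series _ _ cu x) (continuous_series _ _ cv x).
  exact: continuous_min (continuous_series _ _ cu x) (continuous_series _ _ cv x).
exists (fun k => \bigcup_(ij in antidiag k) W ij); split.
- by move=> k _; apply: bigcup_open => ij _; exact: oW.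
- move=> x; have [||i [j [iin jm Wx]]] := steps_meet_exists _ _ n m _ _
      (series_gt0 _ n (u0^~ x) (ucov x)) (series_gt0 _ m (v0^~ x) (vcov x)).
  + by rewrite series0.
  + by rewrite series0.
  by exists (i + j)%N; [exact: leq_add | exists (i, j)].
- move=> k _; apply: homotopic_on_bigcup.
  + by move=> ij _; exact: oW.
  + move=> [i j] [i' j'] [_ _ e] [_ _ e'] [x [Wx Wx']].
    by apply: steps_meet_antidiag Wx Wx' (etrans e (esym e'));
      apply: series_nondecreasing.
  move=> [i j] [/= iin jm _]; apply: (homotopic_on_trans _ _ g).
    apply: homotopic_on_subset (hU i iin) => x Wx; apply: uU.
    by move: Wx; rewrite /W /= steps_meetE series_ltS => /andP[].
  apply: homotopic_on_subset (hV j jm) => x Wx; apply: vV.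
  by move: Wx; rewrite /W /= steps_meetE !series_ltS => /and4P[].
Qed.

Local Open Scope ereal_scope.

Theorem proposition3p17 (X Y : topologicalType) (f g h : X -> Y) :
  normal_space X -> continuous f -> continuous g -> continuous h ->
  hdist f h <= hdist f g + hdist g h.
Proof.
move=> nX _ _ _; apply: ereal_inf_nat_add => n m.
exact: hdist_cover_add.
Qed.
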